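(* Let $\Delta\ge1$, $\beta\ge0$, $\eta\in[0,1)$, and let $G$ be a finite graph of maximum degree at most $\Delta$. If $\lambda>0$ is such that $\eta_G(\beta,\lambda)=\eta$, then \[1\le\lambda\le\sqrt{\frac{1+\eta}{1-\eta}}\,e^{\beta\Delta/2}.\]
   Context: The Ising model on $G$ at inverse temperature $\beta$ and activity $\lambda>0$ is $\mu_{G,\beta,\lambda}(\sigma)\propto e^{\frac{\beta}{2}\sum_{uv\in E(G)}\sigma_u\sigma_v}\lambda^{M(\sigma)}$ on $\{\pm1\}^{V(G)}$ with $M(\sigma)=\sum_v\sigma_v$; the mean magnetization is $\eta_G(\beta,\lambda)=\mathbb{E}_{\mu_{G,\beta,\lambda}}[M(\sigma)]/|V(G)|$. *)

From HB Require Import structures.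
From mathcomp Require Import all_boot all_order all_algebra.
From mathcomp Require Import all_classical all_reals all_analysis.
Set Implicit Arguments. Unset Strict Implicit. Unset Printing Implicit Defensive.
Import Order.TTheory GRing.Theory Num.Theory.
Local Open Scope ring_scope.

Definition simple_graph (T : finType) (e : rel T) : Prop :=
  symmetric e /\ irreflexive e.

Definition max_deg_le (T : finType) (e : rel T) (D : nat) : Prop :=
  forall x : T, (#|[set y | e x y]| <= D)%N.

Definition spin (T : finType) (s : {ffun T -> bool}) (v : T) : int :=
  if s v then 1 else -1.

Definition magn (T : finType) (s : {ffun T -> bool}) : int :=
  \sum_(v : T) spin s v.

(* sum over (unordered) edges uv of sigma_u sigma_v; each edge counted once,
   i.e. half the sum over ordered adjacent pairs *)
Definition edge_sum (R : realType) (T : finType) (e : rel T)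
    (s : {ffun T -> bool}) : R :=
  (\sum_(u : T) \sum_(v : T | e u v) (spin s u * spin s v)%:~R) / 2.

Definition ising_weight (R : realType) (T : finType) (e : rel T)
    (beta lam : R) (s : {ffun T -> bool}) : R :=
  expR (beta / 2 * edge_sum R e s) * lam ^ (magn s).

Definition partition_fn (R : realType) (T : finType) (e : rel T) (beta lam : R) : R :=
  \sum_(s : {ffun T -> bool}) ising_weight e beta lam s.

Definition mean_magn (R : realType) (T : finType) (e : rel T) (beta lam : R) : R :=
  (\sum_(s : {ffun T -> bool}) ising_weight e beta lam s * (magn s)%:~R)
  / partition_fn e beta lam / (#|T|)%:R.

From HB Require Import structures.
From mathcomp Require Import all_boot all_order all_algebra.
From mathcomp Require Import all_classical all_reals all_analysis.
From mathcomp Require Import ring lra.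
Import Order.TTheory GRing.Theory Num.Theory.
Set Implicit Arguments. Unset Strict Implicit. Unset Printing Implicit Defensive.
Local Open Scope ring_scope.

(* Lower bound: the global spin flip preserves the edge sum
   H(s) = sum_{uv in E} s_u s_v and negates M, so pairing each configuration with its flip gives
   2 Z E[M] = sum_s e^{beta/2 H(s)} (lam^M(s) - lam^{-M(s)}) M(s).  For lam < 1
   every term is <= 0 and the all-plus term is < 0, hence E[M] < 0.
   Upper bound: turning a minus spin at v into a plus spin multiplies lam^M by
   lam^2 and lowers H by at most 2 Delta, so the weights
   P_v, N_v of the configurations with s_v = +1, -1 satisfy
   P_v >= lam^2 e^{-beta Delta} N_v.  As Z = P_v + N_v and
   Z E[M] = sum_v (P_v - N_v), summing over v yields
   lam^2 e^{-beta Delta} (1 - eta) <= 1 + eta. *)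

Lemma expz_subN_mulr_lt0 (R : realFieldType) (x : R) (m : int) :
  0 < x < 1 -> m != 0 -> (x ^ m - x ^ (- m)) * m%:~R < 0.
Proof.
move=> /andP[x_gt0 x_lt1].
wlog m_gt0 : m / 0 < m => [gt0_case|_].
  move=> m_neq0; have [m_lt0|m_gt0|m0] := ltgtP m 0; last by rewrite m0 in m_neq0.
    have := gt0_case (- m); rewrite opprK oppr_gt0 oppr_eq0 rmorphN mulrN -mulNr opprB.
    by apply.
  exact: gt0_case.
case: m m_gt0 => // n n_gt0.
have xn_lt1 : x ^+ n < 1 by rewrite exprn_ilt1 ?ltW // -lt0n.
rewrite -exprnN pmulr_llt0 ?ltr0z // subr_lt0 (lt_trans xn_lt1) //.
by rewrite invf_gt1 ?exprn_gt0.
Qed.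

Lemma expz_subN_mulr_le0 (R : realFieldType) (x : R) (m : int) :
  0 < x < 1 -> (x ^ m - x ^ (- m)) * m%:~R <= 0.
Proof.
have [->|m_neq0] := eqVneq m 0; first by rewrite mulr0.
by move=> x_bounds; apply/ltW/expz_subN_mulr_lt0.
Qed.

Lemma ler_sqrt_mulr_expR_half (R : realType) (x q c : R) :
  0 < x -> 0 <= q -> x ^+ 2 * expR (- c) <= q -> x <= Num.sqrt q * expR (c / 2).
Proof.
move=> x_gt0 q_ge0; rewrite expRN ler_pdivrMr ?expR_gt0 // => le_x2.
rewrite -[x]gtr0_norm // -sqrtr_sqr -[expR _]gtr0_norm ?expR_gt0 // -sqrtr_sqr.
rewrite -sqrtrM // ler_sqrt ?mulr_ge0 ?sqr_ge0 //.
by rewrite -expRM_natr divfK ?pnatr_eq0.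
Qed.

Section SpinFlips.
Variable T : finType.
Implicit Types (s : {ffun T -> bool}) (v : T).

Definition flip_at v s : {ffun T -> bool} :=
  [ffun x => if x == v then ~~ s x else s x].

Definition flip_all s : {ffun T -> bool} := [ffun x => ~~ s x].

Lemma flip_atK v : involutive (flip_at v).
Proof. by move=> s; apply/ffunP=> x; rewrite !ffunE; case: eqP; rewrite ?negbK. Qed.

Lemma flip_allK : involutive flip_all.
Proof. by move=> s; apply/ffunP=> x; rewrite !ffunE negbK. Qed.

Lemma magn_flip_at s v : s v = false -> magn (flip_at v s) = magn s + 2.
Proof.
move=> sv; rewrite /magn (bigD1 v) //= [in RHS](bigD1 v) //= addrAC.
congr (_ + _); last by apply: eq_bigr => x /negbTE xv; rewrite /spin ffunE xv.
by rewrite /spin ffunE eqxx sv.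
Qed.

Lemma magn_flip_all s : magn (flip_all s) = - magn s.
Proof. by rewrite /magn -sumrN; apply: eq_bigr => x _; rewrite /spin ffunE; case: (s x). Qed.

Lemma spinE (R : numDomainType) s v : (spin s v)%:~R = (if s v then 1 else -1 : R).
Proof. by rewrite /spin; case: (s v); rewrite ?rmorphN. Qed.

Lemma spin_flip_at_mulr_ge (R : realDomainType) s v x y :
  (spin s x * spin s y)%:~R - 2 * ((x == v)%:R + (y == v)%:R) <=
  (spin (flip_at v s) x * spin (flip_at v s) y)%:~R :> R.
Proof.
rewrite !intrM !spinE !ffunE.
by case: (x == v); case: (y == v); case: (s x); case: (s y) => /=; lra.
Qed.

Lemma magn_cst_true : magn [ffun _ : T => true] = #|T|%:Z.
Proof. by rewrite /magn; under eq_bigr do rewrite /spin ffunE; rewrite sumr_const -natz. Qed.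

End SpinFlips.

Section EdgeSum.
Variables (R : realType) (T : finType) (e : rel T).

Lemma edge_sum_flip_all s : edge_sum R e (flip_all s) = edge_sum R e s.
Proof.
rewrite /edge_sum; congr (_ / 2); apply: eq_bigr => x _; apply: eq_bigr => y _.
by rewrite /spin !ffunE; case: (s x); case: (s y).
Qed.

Hypothesis e_sym : symmetric e.

Lemma sum_adj_indicator v :
  \sum_x \sum_(y | e x y) ((x == v)%:R + (y == v)%:R : R) =
  2 * #|[set y | e v y]|%:R.
Proof.
have deg_vE : \sum_(y | e v y) (1 : R) = #|[set y | e v y]|%:R.
  by rewrite -[RHS]sumr_const; apply: eq_bigl => y; rewrite inE.
have out_vE : \sum_x \sum_(y | e x y) ((x == v)%:R : R) = \sum_(y | e v y) 1.
  rewrite (bigD1 v) //= [X in _ + X]big1 ?addr0.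
    by apply: eq_bigr => y _; rewrite eqxx.
  by move=> x /negbTE xv; apply: big1 => y _; rewrite xv.
have in_vE : \sum_x \sum_(y | e x y) ((y == v)%:R : R) = \sum_(y | e v y) 1.
  rewrite (exchange_big_dep predT) //= (bigD1 v) //= [X in _ + X]big1 ?addr0.
    by apply: eq_big => [x|x _]; [rewrite e_sym | rewrite eqxx].
  by move=> y /negbTE yv; apply: big1 => x _; rewrite yv.
under eq_bigr do rewrite big_split /=.
by rewrite big_split /= out_vE in_vE deg_vE mulr_natl mulr2n.
Qed.

Variable D : nat.
Hypothesis e_deg : max_deg_le e D.

Lemma edge_sum_flip_at_ge s v : edge_sum R e s - 2 * D%:R <= edge_sum R e (flip_at v s).
Proof.
have flip_ge : \sum_x \sum_(y | e x y) (spin s x * spin s y)%:~R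
    - 2 * (2 * #|[set y | e v y]|%:R) <=
  \sum_x \sum_(y | e x y) (spin (flip_at v s) x * spin (flip_at v s) y)%:~R :> R.
  rewrite -sum_adj_indicator mulr_sumr -sumrB; apply: ler_sum => x _.
  rewrite mulr_sumr -sumrB; apply: ler_sum => y _; exact: spin_flip_at_mulr_ge.
have deg_le : #|[set y | e v y]|%:R <= D%:R :> R by rewrite ler_nat e_deg.
rewrite /edge_sum; lra.
Qed.

End EdgeSum.

Section IsingWeights.
Variables (R : realType) (T : finType) (e : rel T) (beta lam : R).
Hypothesis lam_gt0 : 0 < lam.
Implicit Types (s : {ffun T -> bool}) (v : T).
Local Notation w := (ising_weight e beta lam).
Local Notation Z := (partition_fn e beta lam).

Definition weighted_magn : R := \sum_(s : {ffun T -> bool}) w s * (magn s)%:~R.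

Definition up_weight (v : T) : R := \sum_(s : {ffun T -> bool} | s v) w s.

Definition down_weight (v : T) : R := \sum_(s : {ffun T -> bool} | ~~ s v) w s.

Lemma ising_weight_gt0 s : 0 < w s.
Proof. by rewrite mulr_gt0 ?expR_gt0 ?exprz_gt0. Qed.

Lemma partition_fn_gt0 : 0 < Z.
Proof.
rewrite /partition_fn (bigD1 [ffun=> true]) //= ltr_pwDl ?ising_weight_gt0 //.
by rewrite sumr_ge0 // => s _; apply/ltW/ising_weight_gt0.
Qed.

Lemma partition_fn_up_down v : Z = up_weight v + down_weight v.
Proof. exact: bigID. Qed.

Lemma weighted_magn_up_down : weighted_magn = \sum_v (up_weight v - down_weight v).
Proof.
rewrite /weighted_magn; under eq_bigr => s _ do rewrite /magn rmorph_sum mulr_sumr.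
rewrite exchange_big; apply: eq_bigr => v _; rewrite (bigID (fun s : {ffun T -> bool} => s v)) /=.
congr (_ + _); first by apply: eq_bigr => s sv; rewrite /spin sv mulr1.
by rewrite -sumrN; apply: eq_bigr => s /negbTE sv; rewrite /spin sv mulrN1.
Qed.

Lemma weighted_magn_flip_all : weighted_magn *+ 2 =
  \sum_s expR (beta / 2 * edge_sum R e s) *
         ((lam ^ magn s - lam ^ (- magn s)) * (magn s)%:~R).
Proof.
rewrite mulr2n {2}/weighted_magn (reindex_inj (can_inj (@flip_allK T))) -big_split /=.
apply: eq_bigr => s _.
rewrite /ising_weight edge_sum_flip_all magn_flip_all rmorphN; ring.
Qed.

Lemma weighted_magn_lt0 : lam < 1 -> (0 < #|T|)%N -> weighted_magn < 0.
Proof.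
move=> lam_lt1 T_gt0; have lam_bounds : 0 < lam < 1 by apply/andP.
suff: weighted_magn *+ 2 < 0 by rewrite mulr2n; lra.
rewrite weighted_magn_flip_all (bigD1 [ffun=> true]) //= magn_cst_true.
have all_up_lt0 : (lam ^ #|T| - lam ^ (- #|T|%:Z)) * (#|T|%:Z)%:~R < 0 :> R.
  by apply: expz_subN_mulr_lt0; rewrite // -lt0n.
apply: ltr_nwDl; first by rewrite pmulr_rlt0 ?expR_gt0.
by apply: sumr_le0 => s _; rewrite pmulr_rle0 ?expR_gt0 // expz_subN_mulr_le0.
Qed.

Lemma mean_magn_lt0 : lam < 1 -> (0 < #|T|)%N -> mean_magn e beta lam < 0.
Proof.
move=> lam_lt1 T_gt0; rewrite /mean_magn -/weighted_magn.
by rewrite !pmulr_llt0 ?invr_gt0 ?partition_fn_gt0 ?ltr0n ?weighted_magn_lt0.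
Qed.

Variable D : nat.
Hypotheses (e_sym : symmetric e) (e_deg : max_deg_le e D) (beta_ge0 : 0 <= beta).

Lemma ising_weight_flip_at_ge s v : s v = false ->
  lam ^+ 2 * expR (- (beta * D%:R)) * w s <= w (flip_at v s).
Proof.
move=> sv; rewrite /ising_weight magn_flip_at // expfzDr ?gt_eqF //.
have le_expR : expR (- (beta * D%:R)) * expR (beta / 2 * edge_sum R e s)
               <= expR (beta / 2 * edge_sum R e (flip_at v s)).
  rewrite -expRD ler_expR.
  have := ler_wpM2l (_ : 0 <= beta / 2) (edge_sum_flip_at_ge R e_sym e_deg s v).
  by rewrite divr_ge0 //; lra.
rewrite (_ : lam ^ (2 : int) = lam ^+ 2) //.
rewrite -[X in X <= _](_ : expR (- (beta * D%:R)) * expR (beta / 2 * edge_sum R e s)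
   * (lam ^ magn s * lam ^+ 2) = _); last by ring.
by apply: ler_wpM2r le_expR; rewrite mulr_ge0 ?exprz_ge0 ?exprn_ge0 ?ltW.
Qed.

Lemma down_weight_le_up_weight v :
  lam ^+ 2 * expR (- (beta * D%:R)) * down_weight v <= up_weight v.
Proof.
rewrite /up_weight (reindex_inj (can_inj (flip_atK v))) mulr_sumr.
rewrite [X in _ <= X](eq_bigl (fun s => ~~ s v)) => [|s]; last by rewrite ffunE eqxx.
by apply: ler_sum => s /negbTE; apply: ising_weight_flip_at_ge.
Qed.

Lemma mean_magn_upper : (0 < #|T|)%N ->
  lam ^+ 2 * expR (- (beta * D%:R)) * (1 - mean_magn e beta lam) <=
  1 + mean_magn e beta lam.
Proof.
move=> T_gt0; set r := _ * expR _; set n : R := #|T|%:R.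
have Z_gt0 := partition_fn_gt0.
have n_gt0 : 0 < n by rewrite ltr0n.
have Zn_gt0 : 0 < Z * n by rewrite mulr_gt0.
have per_vertex v : r * (Z - (up_weight v - down_weight v)) <= Z + (up_weight v - down_weight v).
  by rewrite (partition_fn_up_down v); have := down_weight_le_up_weight v; rewrite -/r; lra.
have : \sum_v r * (Z - (up_weight v - down_weight v)) <=
        \sum_v (Z + (up_weight v - down_weight v)).
  by apply: ler_sum => v _; apply: per_vertex.
rewrite -mulr_sumr sumrB -weighted_magn_up_down big_split /= -weighted_magn_up_down.
rewrite sumr_const -mulr_natr -/n => sum_le.
rewrite /mean_magn -/weighted_magn -/n -(ler_pM2r Zn_gt0).
have -> : r * (1 - weighted_magn / Z / n) * (Z * n) = r * (Z * n - weighted_magn).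
  by field; rewrite !gt_eqF.
have -> : (1 + weighted_magn / Z / n) * (Z * n) = Z * n + weighted_magn.
  by field; rewrite !gt_eqF.
exact: sum_le.
Qed.

End IsingWeights.

Theorem lemma17 (R : realType) (T : finType) (e : rel T) (D : nat)
    (beta eta lam : R) :
  (0 < #|T|)%N -> simple_graph e -> max_deg_le e D -> (1 <= D)%N ->
  0 <= beta -> 0 <= eta -> eta < 1 -> 0 < lam ->
  mean_magn e beta lam = eta ->
  1 <= lam /\
  lam <= Num.sqrt ((1 + eta) / (1 - eta)) * expR (beta * D%:R / 2).
Proof.
move=> T_gt0 [e_sym _] e_deg _ beta_ge0 eta_ge0 eta_lt1 lam_gt0 mean_eta.
split.
  rewrite leNgt; apply/negP => lam_lt1.
  by have := mean_magn_lt0 e beta lam_gt0 lam_lt1 T_gt0; rewrite mean_eta ltNge eta_ge0.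
apply: ler_sqrt_mulr_expR_half => //; first by apply: divr_ge0; lra.
rewrite ler_pdivlMr ?subr_gt0 // -mean_eta.
exact: mean_magn_upper.
Qed.
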